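(* Let $P\in\mathcal{N}_2$ via the pair of chain covers $\{\mathcal{C}_1,\mathcal{C}_2\}$, and let $\bm{c}\subseteq P$ be a convex subposet of $P$ which is a chain. Then there is a chain in $\mathcal{C}_1$ or a chain in $\mathcal{C}_2$ that contains all of $\bm{c}$.
   Context: All posets are finite. An edge of a poset is a covering relation $x \lessdot y$. A chain cover of a poset $P$ is a set of pairwise disjoint saturated chains whose union is $P$. A labeling of $P$ is a map $\lambda:P\to\mathbb{R}$. For a chain cover $\mathcal{C}$, $\mathcal{C}$-sorting a labeling means: for each chain $\bm{c}\in\mathcal{C}$, permute the labels $\{\lambda(v): v\in \bm{c}\}$ among the elements of $\bm{c}$ so that they are non-decreasing from the minimum of $\bm{c}$ to its maximum. A finite poset $P$ is in $\mathcal{N}_2$ via $\{\mathcal{C}_1,\mathcal{C}_2\}$ if $\{\mathcal{C}_1,\mathcal{C}_2\}$ is an unordered pair of chain covers of $P$ such that (1) for every labeling of $P$ and for $i=1$ and $i=2$, first $\mathcal{C}_i$-sorting and then $\mathcal{C}_{3-i}$-sorting leaves the labels non-decreasing along every chain of $\mathcal{C}_i$; and (2) every edge of $P$ is contained in some chain of $\mathcal{C}_1$ or of $\mathcal{C}_2$. A subset $S$ is convex if $x\le z\le y$ with $x,y\in S$ implies $z\in S$. *)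

From HB Require Import structures.
From mathcomp Require Import all_boot all_order all_algebra all_fingroup.
From mathcomp Require Import reals.
Set Implicit Arguments. Unset Strict Implicit. Unset Printing Implicit Defensive.
Import Order.TTheory GRing.Theory Num.Theory.

Section N2Defs.
Context {disp : Order.disp_t} {P : finPOrderType disp}.
Local Open Scope order_scope.

Definition covers (x y : P) : bool :=
  (x < y) && [forall z : P, ~~ ((x < z) && (z < y))].

Definition is_chain (S : {set P}) : Prop :=
  forall x y, x \in S -> y \in S -> (x <= y) || (y <= x).

Definition saturated_chain (S : {set P}) : Prop :=
  [/\ S != set0, is_chain S &
      forall x y, x \in S -> y \in S -> x < y ->
        (forall z, z \in S -> ~~ ((x < z) && (z < y))) -> covers x y].

Definition chain_cover (C : {set {set P}}) : Prop :=
  partition C [set: P] /\ forall c, c \in C -> saturated_chain c.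

Definition convex (S : {set P}) : Prop :=
  forall x y z, x \in S -> y \in S -> x <= z -> z <= y -> z \in S.

Definition is_Csort (R : realType) (C : {set {set P}}) (lam mu : P -> R) : Prop :=
  forall c, c \in C ->
    (exists s : {perm P}, perm_on c s /\ forall x, x \in c -> mu x = lam (s x)) /\
    (forall x y, x \in c -> y \in c -> x <= y -> (mu x <= mu y)%R).

Definition in_N2 (R : realType) (C1 C2 : {set {set P}}) : Prop :=
  [/\ chain_cover C1, chain_cover C2,
      (forall (Ci Cj : {set {set P}}), (Ci, Cj) = (C1, C2) \/ (Ci, Cj) = (C2, C1) ->
        forall lam mu nu : P -> R, is_Csort Ci lam mu -> is_Csort Cj mu nu ->
        forall c, c \in Ci -> forall x y, x \in c -> y \in c -> x <= y -> (nu x <= nu y)%R) &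
      (forall x y, covers x y ->
        exists2 c, c \in C1 :|: C2 & (x \in c) && (y \in c))].

End N2Defs.

From HB Require Import structures.
From mathcomp Require Import all_boot all_order all_algebra all_fingroup.
From mathcomp Require Import reals.
Set Implicit Arguments. Unset Strict Implicit. Unset Printing Implicit Defensive.
Import Order.TTheory GRing.Theory Num.Theory.
Local Open Scope order_scope.

(* Let u < v be the two least elements of c and m
   its largest one; if c has at most two elements it is a point or, by
   convexity, an edge, and lies in a block by the covering axiom. Otherwise,
   by induction c \ {m} lies in a block D and c \ {u} in a block D'. If neither
   contains all of c, then D contains [u, m) but not m, D' contains v and m but
   not u, and D, D' belong to different covers. The 0/1 labeling that is 1
   exactly on {x >= u} \ {m} is already sorted along the cover of D, and
   sorting it along the cover of D' merely swaps the labels of v and m; the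
   result is 1 at u and 0 at v, both in D, so the first sort is destroyed. *)

Lemma chain_maximum {disp : Order.disp_t} {P : finPOrderType disp} (S : {set P}) :
  S != set0 -> is_chain S -> exists2 m, m \in S & forall y, y \in S -> y <= m.
Proof.
case/set0Pn=> x0 Sx0 chS.
have [m Sm maxm] := @arg_maxnP _ x0 (mem S) (fun i => #|[set y | y < i]|) Sx0.
exists m => // y Sy; case/orP: (chS _ _ Sy Sm) => // le_my.
case: (eqVneq y m) => [-> // | ne_ym].
have lt_my : m < y by rewrite lt_def ne_ym.
apply: contraTT (maxm y Sy) => _; rewrite -ltnNge.
apply: proper_card; apply/properP; split.
  by apply/subsetP=> z; rewrite !inE => /lt_trans; apply.
by exists m; rewrite !inE ?ltxx.
Qed.

Lemma chain_minimum {disp : Order.disp_t} {P : finPOrderType disp} (S : {set P}) :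
  S != set0 -> is_chain S -> exists2 m, m \in S & forall y, y \in S -> m <= y.
Proof.
move=> S0 chS.
have chS_dual : @is_chain _ P^d S by move=> x y Sx Sy; rewrite orbC; exact: chS.
have [m Sm maxm] := @chain_maximum _ P^d S S0 chS_dual.
by exists m.
Qed.

Section ChainCovers.
Context {disp : Order.disp_t} {P : finPOrderType disp}.
Implicit Types (C Ci Cj : {set {set P}}) (c d D S : {set P}) (a b x y u v w m : P).

Lemma chain_cover_block_uniq C d1 d2 x :
  chain_cover C -> d1 \in C -> d2 \in C -> x \in d1 -> x \in d2 -> d1 = d2.
Proof.
case=> /and3P[_ trivC _] _ Cd1 Cd2 xd1 xd2.
by rewrite -(def_pblock trivC Cd1 xd1) (def_pblock trivC Cd2 xd2).
Qed.

Lemma chain_cover_block_exists C x : chain_cover C -> exists2 d, d \in C & x \in d.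
Proof.
case=> /and3P[/eqP coverC _ _] _.
have xC : x \in cover C by rewrite coverC inE.
by exists (pblock C x); [rewrite pblock_mem | rewrite mem_pblock].
Qed.

Lemma is_chain_subset S1 S2 : S1 \subset S2 -> is_chain S2 -> is_chain S1.
Proof. by move=> /subsetP sub12 ch2 x y /sub12 xS2 /sub12; apply: ch2. Qed.

Lemma convexD1 c a :
  convex c -> (forall x, x \in c -> x <= a) \/ (forall x, x \in c -> a <= x) ->
  convex (c :\ a).
Proof.
move=> cvx extr x y z; rewrite !inE => /andP[xa xc] /andP[ya yc] xz zy.
rewrite (cvx x y z) // andbT; apply/eqP => za; subst z.
case: extr => [below_a | above_a].
  by case/eqP: ya; apply/le_anti; rewrite below_a.
by case/eqP: xa; apply/le_anti; rewrite xz above_a.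
Qed.

Lemma convex_successor_covers c u v :
  convex c -> u \in c -> v \in c -> u < v ->
  (forall x, x \in c -> u < x -> v <= x) -> covers u v.
Proof.
move=> cvx uc vc uv succ; rewrite /covers uv; apply/forallP => z.
apply/negP => /andP[uz zv].
have zc : z \in c by rewrite (cvx u v z) ?ltW.
by move: (lt_le_trans zv (succ z zc uz)); rewrite ltxx.
Qed.

Section Sorting.
Variable R : realType.

Definition nondecreasing_along C (f : P -> R) :=
  forall d, d \in C -> forall x y, x \in d -> y \in d -> x <= y -> (f x <= f y)%R.

Definition sort_stable Ci Cj :=
  forall lam mu nu : P -> R, is_Csort Ci lam mu -> is_Csort Cj mu nu ->
  nondecreasing_along Ci nu.

Lemma is_Csort_id C (f : P -> R) : nondecreasing_along C f -> is_Csort C f f.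
Proof.
move=> f_nd d Cd; split; last exact: f_nd.
by exists 1%g; split=> [|x _]; rewrite ?perm_on1 ?perm1.
Qed.

Lemma is_Csort_tperm C D a b (f : P -> R) :
  chain_cover C -> D \in C -> a \in D -> b \in D ->
  nondecreasing_along C (f \o tperm a b) -> is_Csort C f (f \o tperm a b).
Proof.
move=> coverC CD aD bD f_nd d Cd; split; last exact: f_nd.
have [-> | neq_dD] := eqVneq d D.
  exists (tperm a b); split=> //; apply: subset_trans (tperm_on a b) _.
  by rewrite subUset !sub1set aD bD.
have outside_d y : y \in D -> y \notin d.
  by move=> yD; apply: contra neq_dD => yd; rewrite (chain_cover_block_uniq coverC Cd CD yd yD).
exists 1%g; split=> [|x xd]; first exact: perm_on1.
by rewrite perm1 /= tpermD //; apply: contraTneq xd => <-; rewrite outside_d.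
Qed.

Definition upsetD1_indicator u w : P -> R := fun x => (((u <= x)%O && (x != w))%:R)%R.

Lemma upsetD1_indicator_homo u w x y :
  x <= y -> (u <= x < w -> y != w) ->
  (upsetD1_indicator u w x <= upsetD1_indicator u w y)%R.
Proof.
rewrite /upsetD1_indicator ler_nat => xy no_drop.
have [ux | //] := boolP (u <= x); rewrite (le_trans ux xy) /=.
have [yw | _] := eqVneq y w; last by case: (x != w).
have [// | xw] := eqVneq x w.
by move: no_drop; rewrite ux lt_neqAle xw -yw xy eqxx => /(_ isT).
Qed.

Lemma upsetD1_indicator_tperm u v m :
  u <= v -> u <= m -> upsetD1_indicator u v =1 upsetD1_indicator u m \o tperm v m.
Proof.
rewrite /upsetD1_indicator => uv um x /=.
case: tpermP => [-> | -> | /eqP xv /eqP xm]; first by rewrite !eqxx !andbF.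
  by rewrite uv um eq_sym.
by rewrite xv xm.
Qed.

Lemma sort_stable_no_crossing Ci Cj D D' u v m :
  chain_cover Ci -> chain_cover Cj -> sort_stable Ci Cj ->
  D \in Ci -> D' \in Cj -> u \in D -> u \notin D' -> v \in D' ->
  m \in D' -> m \notin D -> covers u v -> v < m ->
  (forall x, u <= x < m -> x \in D) -> False.
Proof.
move=> coverCi coverCj stable CiD CjD' uD uD' vD' mD' mD /andP[uv no_between] vm segD.
pose lam := upsetD1_indicator u m.
have nuE := upsetD1_indicator_tperm (ltW uv) (ltW (lt_trans uv vm)).
have lam_nd : nondecreasing_along Ci lam.
  move=> d Cid x y xd yd xy; apply: upsetD1_indicator_homo xy _ => /segD xD.
  rewrite (chain_cover_block_uniq coverCi Cid CiD xd xD) in yd.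
  by apply: contraNneq mD => <-.
have nu_nd : nondecreasing_along Cj (lam \o tperm v m).
  move=> d Cjd x y xd yd xy; rewrite -!nuE.
  apply: upsetD1_indicator_homo xy _ => /andP[ux xv].
  have [xu | neq_xu] := eqVneq x u; last first.
    by move: (forallP no_between x); rewrite lt_neqAle eq_sym neq_xu ux xv.
  apply: contraNneq uD' => yv.
  have dD' : d = D' by apply: chain_cover_block_uniq coverCj Cjd CjD' _ vD'; rewrite -yv.
  by rewrite -dD' -xu.
have vD : v \in D by rewrite segD ?ltW.
have := stable _ _ _ (is_Csort_id lam_nd) (is_Csort_tperm coverCj CjD' vD' mD' nu_nd)
  D CiD u v uD vD (ltW uv).
by rewrite -!nuE /upsetD1_indicator lexx eqxx (lt_eqF uv) andbF ler_nat.
Qed.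

End Sorting.

Section ConvexChains.
Variables (R : realType) (C1 C2 : {set {set P}}).
Hypotheses (cover1 : chain_cover C1) (cover2 : chain_cover C2).
Hypotheses (stable12 : sort_stable R C1 C2) (stable21 : sort_stable R C2 C1).
Hypothesis edges_in_blocks :
  forall x y, covers x y -> exists2 d, d \in C1 :|: C2 & (x \in d) && (y \in d).

Lemma blocks_no_crossing D D' u v m :
  D \in C1 :|: C2 -> D' \in C1 :|: C2 -> u \in D -> u \notin D' -> v \in D' ->
  m \in D' -> m \notin D -> covers u v -> v < m ->
  (forall x, u <= x < m -> x \in D) -> False.
Proof.
move=> CD CD' uD uD' vD' mD' mD uv vm segD.
have vD : v \in D by rewrite segD // vm andbT ltW //; case/andP: uv.
have same_cover C : chain_cover C -> D \in C -> D' \in C -> False.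
  move=> coverC CD1 CD1'.
  by move: mD; rewrite (chain_cover_block_uniq coverC CD1 CD1' vD vD') mD'.
have across_covers Ci Cj : chain_cover Ci -> chain_cover Cj -> sort_stable R Ci Cj ->
    D \in Ci -> D' \in Cj -> False.
  by move=> coverCi coverCj stable CiD CjD'; exact: sort_stable_no_crossing
    coverCi coverCj stable CiD CjD' uD uD' vD' mD' mD uv vm segD.
case/setUP: CD => CiD; case/setUP: CD' => CjD'.
- exact: same_cover cover1 CiD CjD'.
- exact: across_covers cover1 cover2 stable12 CiD CjD'.
- exact: across_covers cover2 cover1 stable21 CiD CjD'.
- exact: same_cover cover2 CiD CjD'.
Qed.

Lemma halves_in_block c u v m D D' :
  convex c -> u \in c -> v \in c -> m \in c -> covers u v -> v < m ->
  D \in C1 :|: C2 -> D' \in C1 :|: C2 -> c :\ m \subset D -> c :\ u \subset D' ->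
  exists2 d, d \in C1 :|: C2 & c \subset d.
Proof.
move=> cvx uc vc mc uv vm CD CD' cmD cuD'.
have [mD | mD] := boolP (m \in D).
  by exists D => //; rewrite -(setD1K mc) subUset sub1set mD.
have [uD' | uD'] := boolP (u \in D').
  by exists D' => //; rewrite -(setD1K uc) subUset sub1set uD'.
have inD x : x \in c -> x != m -> x \in D.
  by move=> xc xm; apply: (subsetP cmD); rewrite !inE xm.
have inD' x : x \in c -> x != u -> x \in D'.
  by move=> xc xu; apply: (subsetP cuD'); rewrite !inE xu.
have [lt_uv _] := andP uv.
exfalso; apply: (blocks_no_crossing CD CD' _ uD' _ _ mD uv vm).
- by rewrite inD // lt_eqF // (lt_trans lt_uv vm).
- by rewrite inD' // gt_eqF.
- by rewrite inD' // gt_eqF // (lt_trans lt_uv vm).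
move=> x /andP[ux xm]; rewrite inD ?lt_eqF //.
exact: (cvx u m x uc mc ux (ltW xm)).
Qed.

Lemma convex_chain_in_block c :
  convex c -> is_chain c -> c != set0 -> exists2 d, d \in C1 :|: C2 & c \subset d.
Proof.
have [n] := ubnP #|c|; elim: n c => // n IH c size_c cvx chc c0.
have [u uc u_min] := chain_minimum c0 chc.
have [m mc m_max] := chain_maximum c0 chc.
have [um | um] := eqVneq u m.
  have [d Cd ud] := chain_cover_block_exists u cover1.
  exists d; first by rewrite inE Cd.
  apply/subsetP => x xc; suff -> : x = u by [].
  by apply/le_anti; rewrite u_min // um m_max.
have cu0 : c :\ u != set0 by apply/set0Pn; exists m; rewrite !inE eq_sym um.
have [v] := chain_minimum cu0 (is_chain_subset (subsetDl c [set u]) chc).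
rewrite !inE => /andP[vu vc] v_min.
have succ x : x \in c -> u < x -> v <= x.
  by move=> xc ux; rewrite v_min // !inE xc gt_eqF.
have uv : covers u v.
  apply: (convex_successor_covers cvx uc vc _ succ).
  by rewrite lt_neqAle eq_sym vu u_min.
have [vm | vm] := eqVneq v m.
  have [d Cd /andP[ud vd]] := edges_in_blocks uv.
  exists d => //; apply/subsetP => x xc.
  have [-> // | xu] := eqVneq x u.
  suff -> : x = v by [].
  by apply/le_anti; rewrite vm m_max //= -vm succ // lt_neqAle eq_sym xu u_min.
have IH_D1 a b : a \in c -> b \in c -> b != a -> convex (c :\ a) ->
    exists2 d, d \in C1 :|: C2 & c :\ a \subset d.
  move=> ac bc ba cvxa; apply: IH cvxa (is_chain_subset (subsetDl _ _) chc) _.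
    by rewrite (cardsD1 a c) ac in size_c.
  by apply/set0Pn; exists b; rewrite !inE ba.
have mu : m != u by rewrite eq_sym.
have [D CD cmD] := IH_D1 m u mc uc um (convexD1 cvx (or_introl m_max)).
have [D' CD' cuD'] := IH_D1 u m uc mc mu (convexD1 cvx (or_intror u_min)).
have lt_vm : v < m by rewrite lt_neqAle vm m_max.
exact: (halves_in_block cvx uc vc mc uv lt_vm CD CD' cmD cuD').
Qed.

End ConvexChains.

End ChainCovers.

Theorem lemma2p2 (R : realType) (disp : Order.disp_t) (P : finPOrderType disp)
  (C1 C2 : {set {set P}}) (c : {set P}) :
  in_N2 R C1 C2 -> convex c -> is_chain c -> c != set0 ->
  (exists2 d, d \in C1 & c \subset d) \/ (exists2 d, d \in C2 & c \subset d).
Proof.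
case=> cover1 cover2 stable edges cvx chc c0.
have [d C12d cd] := convex_chain_in_block cover1 cover2
  (stable C1 C2 (or_introl erefl)) (stable C2 C1 (or_intror erefl)) edges cvx chc c0.
by case/setUP: C12d => [C1d | C2d]; [left | right]; exists d.
Qed.
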